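(* Let $\mathbb{F}$ be a field, $n\ge1$, and $d=pq$ with integers $p,q\ge1$. For every $n^{d}\times n^{d}$ matrix $M$, $\mathrm{PT\text{-}rank}_{[n]^{pq}}(M)\le\mathrm{PT\text{-}rank}_{[n^p]^q}(M)$.
   Context: $\mathrm{PT\text{-}rank}_{[n]^{pq}}(M)$ is the PT-rank of $M$ viewed as an $n^{pq}\times n^{pq}$ matrix with rows/columns indexed by $[n]^{pq}$; $\mathrm{PT\text{-}rank}_{[n^p]^q}(M)$ is the PT-rank of the same matrix viewed as an $(n^p)^q\times(n^p)^q$ matrix, where each of the $q$ coordinates in $[n^p]$ encodes a consecutive block of $p$ coordinates in $[n]$ (coordinates $(l-1)p+1,\dots,lp$ for the $l$-th). For a matrix indexed by $[N]^m$: $M^{\top_k}$ ($k\in[m]$) swaps the $k$-th row index with the $k$-th column index, $M^{\top_\kappa}$ composes these over $k\in\kappa\subseteq[m]$, $M$ is PT-basic if $\mathrm{rank}(M^{\top_\kappa})=1$ for some $\kappa$, and the PT-rank is the least number of PT-basic matrices summing to $M$. *)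

From HB Require Import structures.
From mathcomp Require Import all_boot all_order all_algebra.
From Stdlib Require Import ClassicalEpsilon.
Set Implicit Arguments. Unset Strict Implicit. Unset Printing Implicit Defensive.
Import GRing.Theory.
Local Open Scope ring_scope.

Section PT.
Variables (F : fieldType) (K : finType) (m : nat).

(* Multi-indices in K^m; K plays the role of [N]. *)
Definition midx := {ffun 'I_m -> K}.
Definition ptmx := {ffun midx * midx -> F}.

Definition ptmx_rank (M : ptmx) : nat :=
  \rank (\matrix_(a < #|{: midx}|, b < #|{: midx}|) M (enum_val a, enum_val b)).

(* Swap the k-th row index with the k-th column index for all k in kappa;
   this is the composition of the partial transposes M^{T_k}, k in kappa
   (these commute). *)
Definition ptswap (kappa : {set 'I_m}) (rc : midx * midx) : midx * midx :=
  ([ffun i => if i \in kappa then rc.2 i else rc.1 i],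
   [ffun i => if i \in kappa then rc.1 i else rc.2 i]).

Definition ptrans (kappa : {set 'I_m}) (M : ptmx) : ptmx :=
  [ffun rc => M (ptswap kappa rc)].

Definition pt_basic (M : ptmx) : Prop :=
  exists kappa : {set 'I_m}, ptmx_rank (ptrans kappa M) = 1%N.

Definition pt_decomp (M : ptmx) (r : nat) : Prop :=
  exists s : seq ptmx,
    [/\ size s = r, (forall A, A \in s -> pt_basic A) & \sum_(A <- s) A = M].

Definition pt_decompb (M : ptmx) (r : nat) : bool :=
  if excluded_middle_informative (pt_decomp M r) then true else false.

Lemma pt_decompbP M r : reflect (pt_decomp M r) (pt_decompb M r).
Proof.
rewrite /pt_decompb; case: excluded_middle_informative => H; constructor => //.
Qed.

Lemma ptrans_set0 (A : ptmx) : ptrans set0 A = A.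
Proof.
apply/ffunP => -[r c]; rewrite ffunE /ptswap /=.
congr (A (_, _)); apply/ffunP => i; by rewrite ffunE inE.
Qed.

Lemma pt_basic_elem (ab : midx * midx) (x : F) : x != 0 ->
  pt_basic [ffun rc => if rc == ab then x else 0].
Proof.
move=> nx; exists set0; rewrite ptrans_set0 /ptmx_rank.
have -> : \matrix_(a < #|{: midx}|, b < #|{: midx}|)
            [ffun rc => if rc == ab then x else 0] (enum_val a, enum_val b)
          = x *: delta_mx (enum_rank ab.1) (enum_rank ab.2).
  apply/matrixP => a b; rewrite !mxE ffunE.
  case: ab => a0 b0 /=; rewrite xpair_eqE.
  have E (i : 'I_#|{: midx}|) y : (enum_val i == y) = (i == enum_rank y).
    by apply/eqP/eqP => [<-|->]; rewrite ?enum_valK ?enum_rankK.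
  rewrite !E.
  by case: (a == _); case: (b == _); rewrite /= ?mulr1 ?mulr0.
by rewrite mxrank_scale_nz // mxrank_delta.
Qed.

Lemma pt_decomp_exists (M : ptmx) : exists r, pt_decompb M r.
Proof.
pose s := [seq [ffun rc => if rc == ab then M ab else 0]
          | ab <- enum [pred ab | M ab != 0]].
exists (size s); apply/pt_decompbP; exists s; split => //.
  move=> A /mapP [ab]; rewrite mem_enum inE => nz ->.
  exact: pt_basic_elem.
apply/ffunP => rc; rewrite sum_ffunE big_map big_enum_cond /=.
under eq_bigr do rewrite ffunE.
case: (boolP (M rc != 0)) => nz.
  rewrite (bigD1 rc) /=; last by rewrite inE nz.
  rewrite eqxx big1 ?addr0 // => ab /andP [_ /negbTE].
  by rewrite eq_sym => ->.
rewrite big1; first by move: nz; rewrite negbK => /eqP.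
by move=> ab nab; case: eqP => // <-; move: nz; rewrite negbK => /eqP.
Qed.

Definition ptrank (M : ptmx) : nat := ex_minn (pt_decomp_exists M).

End PT.

(* Blocking coordinates of [n]^(p*q) into q blocks of p consecutive
   coordinates: the l-th block (0-based) consists of coordinates
   l*p, ..., l*p + p - 1. *)
Lemma blk_div_lt (p q : nat) (i : 'I_(p * q)) : (i %/ p < q)%N.
Proof.
case: p i => [|p] i; first by case: i.
case: i => i /= Hi; by rewrite ltn_divLR // mulnC.
Qed.

Lemma blk_mod_lt (p q : nat) (i : 'I_(p * q)) : (i %% p < p)%N.
Proof.
case: p i => [|p] i; first by case: i.
by case: i => i /=; rewrite ltn_mod.
Qed.

Definition flatten_idx (n p q : nat) (y : {ffun 'I_q -> {ffun 'I_p -> 'I_n}})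
  : {ffun 'I_(p * q) -> 'I_n} :=
  [ffun i : 'I_(p * q) => y (Ordinal (blk_div_lt i)) (Ordinal (blk_mod_lt i))].

(* The same matrix M (flat indexing) viewed with index set ([n]^p)^q. *)
Definition blocked_mx (F : fieldType) (n p q : nat)
  (M : ptmx F 'I_n (p * q)) : ptmx F {ffun 'I_p -> 'I_n} q :=
  [ffun rc => M (flatten_idx rc.1, flatten_idx rc.2)].

(* Cutting [n]^(pq) into q consecutive blocks of p coordinates identifies the
   multi-indices of [n]^(pq) with those of [n^p]^q.  Reindexing along this
   bijection preserves the rank of a matrix, and the partial transpose over a
   set kappa of blocks becomes the partial transpose over the union of the
   blocks in kappa.  Hence every PT-basic matrix for [n^p]^q is PT-basic for
   [n]^(pq), and a PT-decomposition of the blocked matrix is one of M. *)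

From mathcomp Require Import all_boot all_order all_algebra.
Set Implicit Arguments. Unset Strict Implicit. Unset Printing Implicit Defensive.
Import GRing.Theory.
Local Open Scope ring_scope.

Lemma mxrank_mxsub (F : fieldType) m1 n1 m2 n2
    (f : 'I_m2 -> 'I_m1) (g : 'I_n2 -> 'I_n1) (A : 'M[F]_(m1, n1)) :
  (\rank (mxsub f g A) <= \rank A)%N.
Proof.
have -> : mxsub f g A = rowsub f 1%:M *m A *m colsub g 1%:M.
  by rewrite -mulmxA mulmx_colsub mulmx1 -mxsub_mul mul1mx.
exact: leq_trans (mxrankM_maxl _ _) (mxrankM_maxr _ _).
Qed.

Section PTRank.
Variables (F : fieldType) (K : finType) (m : nat).
Implicit Types M : ptmx F K m.

Lemma ptrank_decomp M : pt_decomp M (ptrank M).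
Proof. by rewrite /ptrank; case: ex_minnP => r /pt_decompbP. Qed.

Lemma ptrank_min M r : pt_decomp M r -> (ptrank M <= r)%N.
Proof. by move/pt_decompbP; rewrite /ptrank; case: ex_minnP => r' _; apply. Qed.

End PTRank.

Definition ptmx_reindex (F : fieldType) (K K' : finType) (m m' : nat)
    (f : midx K' m' -> midx K m) (M : ptmx F K m) : ptmx F K' m' :=
  [ffun rc => M (f rc.1, f rc.2)].

Section Reindex.
Variables (F : fieldType) (K K' : finType) (m m' : nat).
Variables (f : midx K' m' -> midx K m) (g : midx K m -> midx K' m').

Lemma ptmx_reindexK :
  cancel g f -> cancel (@ptmx_reindex F _ _ _ _ f) (ptmx_reindex g).
Proof. by move=> gK M; apply/ffunP => -[r c]; rewrite !ffunE /= !gK. Qed.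

Lemma ptmx_reindex0 : ptmx_reindex f (0 : ptmx F K m) = 0.
Proof. by apply/ffunP => rc; rewrite !ffunE. Qed.

Lemma ptmx_reindexD : {morph @ptmx_reindex F _ _ _ _ f : A B / A + B}.
Proof. by move=> A B; apply/ffunP => rc; rewrite !ffunE. Qed.

Lemma ptmx_rank_reindex_le (M : ptmx F K m) :
  (ptmx_rank (ptmx_reindex f M) <= ptmx_rank M)%N.
Proof.
pose h (a : 'I_#|{: midx K' m'}|) : 'I_#|{: midx K m}| :=
  enum_rank (f (enum_val a)).
rewrite /ptmx_rank; set A := (X in (_ <= \rank X)%N).
have -> : \matrix_(a, b) ptmx_reindex f M (enum_val a, enum_val b) = mxsub h h A.
  by apply/matrixP => a b; rewrite !mxE ffunE /h !enum_rankK.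
exact: mxrank_mxsub.
Qed.

End Reindex.

Lemma ptmx_rank_reindex (F : fieldType) (K K' : finType) (m m' : nat)
    (f : midx K' m' -> midx K m) (g : midx K m -> midx K' m') (M : ptmx F K m) :
  cancel g f -> ptmx_rank (ptmx_reindex f M) = ptmx_rank M.
Proof.
move=> gK; apply/eqP; rewrite eqn_leq ptmx_rank_reindex_le /=.
by rewrite -{1}(ptmx_reindexK gK M) ptmx_rank_reindex_le.
Qed.

Lemma ptrank_le_map (F : fieldType) (K K' : finType) (m m' : nat)
    (phi : ptmx F K m -> ptmx F K' m') :
    (forall A, pt_basic A -> pt_basic (phi A)) ->
    phi 0 = 0 -> {morph phi : A B / A + B} ->
  forall M, (ptrank (phi M) <= ptrank M)%N.
Proof.
move=> phi_basic phi0 phiD M; have [s [size_s basic_s sum_s]] := ptrank_decomp M.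
apply: ptrank_min; exists (map phi s); split; first by rewrite size_map.
  by move=> _ /mapP [A As ->]; apply/phi_basic/basic_s.
by rewrite big_map -sum_s (big_morph phi phiD phi0).
Qed.

Section Blocks.
Variables (F : fieldType) (n p q : nat).
Hypothesis p_gt0 : (0 < p)%N.

Lemma blk_idx_lt (l : 'I_q) (j : 'I_p) : (l * p + j < p * q)%N.
Proof.
apply: (@leq_trans (l * p + p)); first by rewrite ltn_add2l.
by rewrite -mulSnr mulnC leq_mul2l ltn_ord orbT.
Qed.

Definition blk_idx (l : 'I_q) (j : 'I_p) : 'I_(p * q) := Ordinal (blk_idx_lt l j).

Lemma blk_idx_div l j : Ordinal (blk_div_lt (blk_idx l j)) = l.
Proof. by apply: val_inj; rewrite /= divnMDl // divn_small ?addn0. Qed.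

Lemma blk_idx_mod l j : Ordinal (blk_mod_lt (blk_idx l j)) = j.
Proof. by apply: val_inj; rewrite /= modnMDl modn_small. Qed.

Definition unflatten_idx (x : {ffun 'I_(p * q) -> 'I_n}) :
    {ffun 'I_q -> {ffun 'I_p -> 'I_n}} :=
  [ffun l => [ffun j => x (blk_idx l j)]].

Lemma flatten_idxK : cancel (@flatten_idx n p q) unflatten_idx.
Proof.
move=> y; apply/ffunP => l; apply/ffunP => j.
by rewrite !ffunE blk_idx_div blk_idx_mod.
Qed.

Lemma unflatten_idxK : cancel unflatten_idx (@flatten_idx n p q).
Proof.
move=> x; apply/ffunP => i; rewrite !ffunE; congr (x _).
by apply: val_inj; rewrite /= -divn_eq.
Qed.

Definition blk_set (kappa : {set 'I_q}) : {set 'I_(p * q)} :=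
  [set i : 'I_(p * q) | Ordinal (blk_div_lt i) \in kappa].

Lemma ptrans_unblock kappa (B : ptmx F {ffun 'I_p -> 'I_n} q) :
  ptrans (blk_set kappa) (ptmx_reindex unflatten_idx B)
  = ptmx_reindex unflatten_idx (ptrans kappa B).
Proof.
apply/ffunP => -[r c]; rewrite !ffunE /ptswap /=.
by congr (B (_, _)); apply/ffunP => l; apply/ffunP => j;
  rewrite !ffunE inE blk_idx_div; case: (l \in kappa); rewrite ffunE.
Qed.

Lemma pt_basic_unblock (B : ptmx F {ffun 'I_p -> 'I_n} q) :
  pt_basic B -> pt_basic (ptmx_reindex unflatten_idx B).
Proof.
case=> kappa rank1; exists (blk_set kappa).
by rewrite ptrans_unblock (ptmx_rank_reindex _ flatten_idxK).
Qed.

Lemma blocked_mxK (M : ptmx F 'I_n (p * q)) :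
  ptmx_reindex unflatten_idx (blocked_mx M) = M.
Proof. exact: ptmx_reindexK unflatten_idxK M. Qed.

End Blocks.

Theorem lemma3p11 (F : fieldType) (n p q : nat)
  (hn : (1 <= n)%N) (hp : (1 <= p)%N) (hq : (1 <= q)%N)
  (M : ptmx F 'I_n (p * q)) :
  (ptrank M <= ptrank (blocked_mx M))%N.
Proof.
rewrite -{1}(blocked_mxK M).
exact: ptrank_le_map (pt_basic_unblock hp) (ptmx_reindex0 F _)
  (ptmx_reindexD _) _.
Qed.
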